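(* Let $\mathcal{X}\subset\mathbb{R}$ be compact and let $p$ be a continuous probability density on $\mathcal{X}$. Assume there exists $\delta>0$ with $\inf_{x\in\mathcal{X}}p(x)>\delta$. Then for every $\epsilon>0$ there exist an integer $N\ge1$ and real constants $\mu_i\in\mathbb{R}$, $\sigma_i>0$ ($i=1,\dots,N$) such that, with $$f_N(x)=\frac{1}{N}\sum_{i=1}^N \frac{e^{-\frac{x-\mu_i}{\sigma_i}}}{\sigma_i\left(1+e^{-\frac{x-\mu_i}{\sigma_i}}\right)^2},$$ one has $\mathrm{KL}(p\,\|\,f_N)=\int_{\mathcal{X}}p(x)\log\frac{p(x)}{f_N(x)}\,dx<\epsilon$.
   Context: $\mathrm{KL}(p\|q)=\int p\log(p/q)$ denotes the Kullback–Leibler divergence. $f_N$ is the density on $\mathbb{R}$ of an equally weighted mixture of $N$ logistic distributions with locations $\mu_i$ and scales $\sigma_i$. *)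

From Stdlib Require Import Reals Lra.
Open Scope R_scope.

Definition logistic_pdf (mu s x : R) : R :=
  exp (- ((x - mu) / s)) / (s * (1 + exp (- ((x - mu) / s))) ^ 2).

(** Equally weighted mixture of N logistic densities (indices 0..N-1). *)
Definition fN (N : nat) (mu sigma : nat -> R) (x : R) : R :=
  / INR N * sum_f_R0 (fun i => logistic_pdf (mu i) (sigma i) x) (pred N).

(** [IntegralOn X g v]: v is the (Lebesgue) integral of g over the compact
    set X.  Expressed via Riemann integrals of g against continuous cut-offs
    phi with 0 <= phi <= 1, phi = 1 on X and phi = 0 at distance >= d from X:
    the integrals must converge to v as d -> 0.  For a compact X and g
    continuous on a neighbourhood of X this characterizes the Lebesgue
    integral of g over X (dominated convergence). *)
Definition IntegralOn (X : R -> Prop) (g : R -> R) (v : R) : Prop :=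
  exists a b : R,
    (forall x, X x -> a + 1 <= x <= b - 1) /\
    forall eps, 0 < eps ->
      exists d, 0 < d /\
        forall phi : R -> R,
          continuity phi ->
          (forall x, 0 <= phi x <= 1) ->
          (forall x, X x -> phi x = 1) ->
          (forall x, (forall y, X y -> d <= Rabs (x - y)) -> phi x = 0) ->
          exists pr : Riemann_integrable (fun x => phi x * g x) a b,
            Rabs (RiemannInt pr - v) < eps.

(* A cut-off copy [q] of [p] with mass at most 1 is sampled on a
   fine grid of step [h]: the grid point [c] gets the weight [h (q c - om)],
   where [om] bounds the oscillation of [q] over a window of radius [d], and a
   logistic bump of scale [s], with [h << s << d].  Rounding the weights to
   multiples of [1/N] turns this into an equally weighted mixture [fN] of [N]
   logistic densities with [fN >= q - eta] everywhere.  Since [p >= m > 0] near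
   [X], this gives [fN >= theta p] near [X] for [theta = exp (-eps/2)], hence
   [ln (p / fN) <= eps/2]; and [fN <= 1/(4s)] bounds [ln (p / fN)] from below.
   So the cut-off integrals of [p ln (p / fN)] are dominated by those of [p]:
   they are Cauchy, and their limit, the divergence, is at most [eps/2]. *)

From Stdlib Require Import Reals Lra Lia Classical.
From Coquelicot Require Import Coquelicot.
Open Scope R_scope.

Fixpoint sum_below (f : nat -> R) (n : nat) : R :=
  match n with O => 0 | S n' => sum_below f n' + f n' end.

Lemma sum_below_le (f g : nat -> R) n :
  (forall j, (j < n)%nat -> f j <= g j) -> sum_below f n <= sum_below g n.
Proof.
  induction n as [|n IH]; intros H; simpl; [lra|].
  assert (sum_below f n <= sum_below g n) by (apply IH; intros; apply H; lia).
  specialize (H n (Nat.lt_succ_diag_r n)); lra.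
Qed.

Lemma sum_below_ext (f g : nat -> R) n :
  (forall j, (j < n)%nat -> f j = g j) -> sum_below f n = sum_below g n.
Proof. intros H; apply Rle_antisym; apply sum_below_le; intros j Hj; rewrite H; lra || lia. Qed.

Lemma sum_below_const c n : sum_below (fun _ => c) n = INR n * c.
Proof. induction n as [|n IH]; simpl sum_below; [simpl; ring|rewrite IH, S_INR; ring]. Qed.

Lemma sum_below_ge0 (f : nat -> R) n :
  (forall j, (j < n)%nat -> 0 <= f j) -> 0 <= sum_below f n.
Proof.
  intros H; rewrite <- (Rmult_0_r (INR n)), <- sum_below_const; now apply sum_below_le.
Qed.

Lemma sum_below_scal c (f : nat -> R) n :
  sum_below (fun j => c * f j) n = c * sum_below f n.
Proof. induction n as [|n IH]; simpl; [ring|rewrite IH; ring]. Qed.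

Lemma sum_below_plus (f g : nat -> R) n :
  sum_below (fun j => f j + g j) n = sum_below f n + sum_below g n.
Proof. induction n as [|n IH]; simpl; [ring|rewrite IH; ring]. Qed.

Lemma sum_below_telescope (P : nat -> R) n :
  sum_below (fun j => P j - P (S j)) n = P O - P n.
Proof. induction n as [|n IH]; simpl; [ring|rewrite IH; ring]. Qed.

Lemma sum_below_succ_l (f : nat -> R) n :
  sum_below f (S n) = f O + sum_below (fun i => f (S i)) n.
Proof. induction n as [|n IH]; simpl in *; [ring|rewrite IH; ring]. Qed.

Lemma sum_below_add (f : nat -> R) m n :
  sum_below f (m + n) = sum_below f m + sum_below (fun i => f (m + i)%nat) n.
Proof.
  induction n as [|n IH]; simpl; [rewrite Nat.add_0_r; ring|].
  rewrite Nat.add_succ_r; simpl; rewrite IH; ring.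
Qed.

Lemma sum_f_R0_pred (f : nat -> R) N :
  (1 <= N)%nat -> sum_f_R0 f (pred N) = sum_below f N.
Proof.
  destruct N as [|N]; [lia|]; intros _; simpl pred.
  induction N as [|N IH]; simpl in *; [ring|rewrite IH; ring].
Qed.

Lemma div_le_div_cross a b c d : 0 < b -> 0 < d -> a * d <= c * b -> a / b <= c / d.
Proof.
  intros Hb Hd H; apply (Rmult_le_reg_r (b * d)); [nra|].
  replace (a / b * (b * d)) with (a * d) by (field; lra).
  replace (c / d * (b * d)) with (c * b) by (field; lra); lra.
Qed.

Lemma exp_le_compat u v : u <= v -> exp u <= exp v.
Proof. intros [H|H]; [left; now apply exp_increasing|now subst]. Qed.

Lemma logistic_pdf_exp mu s x : 0 < s ->
  logistic_pdf mu s x =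
  exp (- ((x - mu) / s)) / (1 + exp (- ((x - mu) / s))) ^ 2 / s.
Proof. intros; unfold logistic_pdf; pose proof (exp_pos (- ((x - mu) / s))); field; lra. Qed.

Lemma logistic_pdf_pos mu s x : 0 < s -> 0 < logistic_pdf mu s x.
Proof.
  intros Hs; rewrite logistic_pdf_exp by lra; pose proof (exp_pos (- ((x - mu) / s))).
  repeat apply Rdiv_lt_0_compat; try apply pow_lt; lra.
Qed.

(* [y / (1 + y)^2 <= 1/4] is [(1 - y)^2 >= 0]. *)
Lemma logistic_pdf_le mu s x : 0 < s -> logistic_pdf mu s x <= / (4 * s).
Proof.
  intros Hs; rewrite logistic_pdf_exp by lra; set (y := exp _).
  assert (0 < y) by apply exp_pos.
  replace (/ (4 * s)) with (1 / 4 / s) by (field; lra).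
  apply Rmult_le_compat_r; [left; apply Rinv_0_lt_compat; lra|].
  apply div_le_div_cross; try apply pow_lt; try lra.
  pose proof (Rle_0_sqr (1 - y)); unfold Rsqr in *; simpl; nra.
Qed.

Lemma logistic_pdf_mode mu s : 0 < s -> logistic_pdf mu s mu = / (4 * s).
Proof.
  intros; unfold logistic_pdf; replace (- ((mu - mu) / s)) with 0 by (field; lra).
  rewrite exp_0; field; lra.
Qed.

Lemma logistic_pdf_shift mu s x : logistic_pdf mu s x = logistic_pdf 0 s (x - mu).
Proof. unfold logistic_pdf; now rewrite Rminus_0_r. Qed.

Lemma logistic_pdf_increasing s u v : 0 < s -> u <= v <= 0 ->
  logistic_pdf 0 s u <= logistic_pdf 0 s v.
Proof.
  intros Hs Huv; rewrite !logistic_pdf_exp, !Rminus_0_r by lra.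
  apply Rmult_le_compat_r; [left; apply Rinv_0_lt_compat; lra|].
  assert (0 < / s) by (apply Rinv_0_lt_compat; lra).
  assert (1 <= exp (- (v / s))) by (rewrite <- exp_0; apply exp_le_compat; unfold Rdiv; nra).
  assert (exp (- (v / s)) <= exp (- (u / s))) by (apply exp_le_compat; unfold Rdiv; nra).
  set (y1 := exp (- (u / s))) in *; set (y2 := exp (- (v / s))) in *.
  assert (0 <= (y1 - y2) * (y1 * y2 - 1)) by (apply Rmult_le_pos; nra).
  apply div_le_div_cross; try apply pow_lt; try lra; simpl; nra.
Qed.

Lemma logistic_pdf_decreasing s u v : 0 < s -> 0 <= u <= v ->
  logistic_pdf 0 s v <= logistic_pdf 0 s u.
Proof.
  intros Hs Huv; rewrite !logistic_pdf_exp, !Rminus_0_r by lra.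
  apply Rmult_le_compat_r; [left; apply Rinv_0_lt_compat; lra|].
  assert (0 < / s) by (apply Rinv_0_lt_compat; lra).
  assert (exp (- (u / s)) <= 1) by (rewrite <- exp_0; apply exp_le_compat; unfold Rdiv; nra).
  assert (exp (- (v / s)) <= exp (- (u / s))) by (apply exp_le_compat; unfold Rdiv; nra).
  pose proof (exp_pos (- (v / s))).
  set (y1 := exp (- (u / s))) in *; set (y2 := exp (- (v / s))) in *.
  assert (0 <= (y1 - y2) * (1 - y1 * y2)) by (apply Rmult_le_pos; nra).
  apply div_le_div_cross; try apply pow_lt; try lra; simpl; nra.
Qed.

Definition logistic_cdf (s t : R) : R := / (1 + exp (- (t / s))).

Lemma logistic_cdf_increasing s u v : 0 < s -> u <= v ->
  logistic_cdf s u <= logistic_cdf s v.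
Proof.
  intros Hs Huv; unfold logistic_cdf; pose proof (exp_pos (- (v / s))).
  apply Rinv_le_contravar; [lra|]; apply Rplus_le_compat_l, exp_le_compat.
  assert (0 < / s) by (apply Rinv_0_lt_compat; lra); unfold Rdiv; nra.
Qed.

Lemma logistic_cdf_derive s t : 0 < s ->
  is_derive (logistic_cdf s) t (logistic_pdf 0 s t).
Proof.
  intros Hs; unfold logistic_cdf, logistic_pdf; rewrite Rminus_0_r; auto_derive.
  - pose proof (exp_pos (- (t / s))); lra.
  - unfold Rdiv; set (e := exp (- (t * / s))); assert (0 < e) by apply exp_pos.
    field; lra.
Qed.

Lemma logistic_cdf_mvt s t h : 0 < s -> 0 < h -> exists xi, t <= xi <= t + h /\
  logistic_cdf s (t + h) - logistic_cdf s t = logistic_pdf 0 s xi * h.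
Proof.
  intros Hs Hh.
  destruct (MVT_gen (logistic_cdf s) t (t + h) (logistic_pdf 0 s)) as [xi [Hxi Heq]].
  - intros; now apply logistic_cdf_derive.
  - intros; apply derivable_continuous_pt; eexists; apply is_derive_Reals;
      now apply logistic_cdf_derive.
  - rewrite Rmin_left, Rmax_right in Hxi by lra.
    exists xi; split; [exact Hxi|]; rewrite Heq; f_equal; ring.
Qed.

(* With [e = exp (-d/s) <= s/d <= tau/4], the mass [(1 - e)/(1 + e)] is at
   least [1 - 2e]. *)
Lemma logistic_cdf_central_mass s d tau : 0 < s -> 0 < d -> 4 * s <= tau * d ->
  1 - tau / 2 <= logistic_cdf s d - logistic_cdf s (- d).
Proof.
  intros Hs Hd Htau; unfold logistic_cdf.
  set (E := exp (d / s)).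
  assert (HE : 1 + d / s <= E) by apply exp_ineq1_le.
  assert (Hds : 0 < d / s) by (apply Rdiv_lt_0_compat; lra).
  replace (exp (- (d / s))) with (/ E) by (unfold E; now rewrite exp_Ropp).
  replace (exp (- (- d / s))) with E by (unfold E, Rdiv; f_equal; ring).
  assert (Htau' : 1 <= tau / 4 * (d / s)).
  { apply (Rmult_le_reg_r (4 * s)); [lra|].
    replace (tau / 4 * (d / s) * (4 * s)) with (tau * d) by (field; lra); lra. }
  assert (0 < tau) by nra.
  replace (/ (1 + / E) - / (1 + E)) with ((E - 1) / (E + 1)) by (field; lra).
  apply (Rmult_le_reg_r (E + 1)); [lra|].
  replace ((E - 1) / (E + 1) * (E + 1)) with (E - 1) by (field; lra); nra.
Qed.

Definition clamp (lo hi t : R) : R := Rmax lo (Rmin hi t).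

Ltac clamp_cases := unfold clamp, Rmax, Rmin; repeat destruct Rle_dec; lra.

Lemma clamp_id lo hi t : lo <= t <= hi -> clamp lo hi t = t.
Proof. intros; clamp_cases. Qed.
Lemma clamp_lo lo hi t : lo <= hi -> t <= lo -> clamp lo hi t = lo.
Proof. intros; clamp_cases. Qed.
Lemma clamp_hi lo hi t : lo <= hi -> hi <= t -> clamp lo hi t = hi.
Proof. intros; clamp_cases. Qed.
Lemma clamp_bounds lo hi t : lo <= hi -> lo <= clamp lo hi t <= hi.
Proof. intros; clamp_cases. Qed.
Lemma clamp_le lo hi t : lo <= t -> clamp lo hi t <= t.
Proof. intros; clamp_cases. Qed.
Lemma clamp_ge lo hi t : t <= hi -> t <= clamp lo hi t.
Proof. intros; clamp_cases. Qed.

(* The left-endpoint Riemann sum of the kernel [logistic_pdf 0 s] over the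
   window [-d-h, d] is compared with the mass [logistic_cdf s d - logistic_cdf s
   (-d)] by telescoping this potential; its [h * pdf] term corrects the sum on
   the increasing half of the kernel, where left endpoints underestimate. *)
Definition window_potential (s d h t : R) : R :=
  logistic_cdf s (clamp (- d) d t) - h * logistic_pdf 0 s (clamp (- d - h) 0 t).

Definition window_term (s d h t : R) : R :=
  if Rle_dec (- d - h) t then if Rle_dec t d then h * logistic_pdf 0 s t else 0 else 0.

Lemma window_increment_le s d h t : 0 < s -> 0 < h -> 0 < d ->
  window_potential s d h (t + h) - window_potential s d h t <= window_term s d h t.
Proof.
  intros Hs Hh Hd; unfold window_potential, window_term.
  destruct (Rle_dec (- d - h) t) as [Hlo|Hlo]; [destruct (Rle_dec t d) as [Hhi|Hhi]|].
  - destruct (logistic_cdf_mvt s t h Hs Hh) as [xi [Hxi Hmvt]].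
    assert (logistic_cdf s (clamp (- d) d (t + h)) <= logistic_cdf s (t + h))
      by (apply logistic_cdf_increasing, clamp_le; lra).
    assert (logistic_cdf s t <= logistic_cdf s (clamp (- d) d t))
      by (apply logistic_cdf_increasing, clamp_ge; lra).
    assert (Hmode := logistic_pdf_mode 0 s Hs).
    assert (Hxi_le : logistic_pdf 0 s xi <= logistic_pdf 0 s (clamp (- d - h) 0 (t + h))).
    { destruct (Rle_dec xi 0).
      - apply logistic_pdf_increasing; [lra|]; split; [clamp_cases|apply clamp_bounds; lra].
      - rewrite clamp_hi, Hmode by lra; apply logistic_pdf_le; lra. }
    destruct (Rle_dec 0 t).
    + rewrite !(clamp_hi (- d - h) 0) by lra.
      assert (logistic_pdf 0 s xi <= logistic_pdf 0 s t)
        by (apply logistic_pdf_decreasing; lra).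
      nra.
    + rewrite (clamp_id (- d - h) 0 t) by lra; nra.
  - rewrite !(clamp_hi (- d) d), !(clamp_hi (- d - h) 0) by lra; lra.
  - rewrite !(clamp_lo (- d) d), (clamp_lo (- d - h) 0 t) by lra.
    assert (logistic_pdf 0 s (- d - h) <= logistic_pdf 0 s (clamp (- d - h) 0 (t + h))).
    { apply logistic_pdf_increasing; [lra|]; split; apply clamp_bounds; lra. }
    nra.
Qed.

Lemma window_sum_ge s d h t0 K : 0 < s -> 0 < h -> 0 < d ->
  d <= t0 -> t0 - INR K * h <= - d - 2 * h ->
  logistic_cdf s d - logistic_cdf s (- d) - h / (4 * s) <=
  sum_below (fun j => window_term s d h (t0 - INR j * h)) K.
Proof.
  intros Hs Hh Hd Htop Hbot.
  set (P := fun j : nat => window_potential s d h (t0 + h - INR j * h)).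
  apply Rle_trans with (sum_below (fun j => P j - P (S j)) K).
  - rewrite sum_below_telescope; unfold P, window_potential; simpl INR.
    rewrite (clamp_hi (- d) d), (clamp_hi (- d - h) 0), logistic_pdf_mode by lra.
    rewrite (clamp_lo (- d) d), (clamp_lo (- d - h) 0) by lra.
    pose proof (logistic_pdf_pos 0 s (- d - h) Hs); unfold Rdiv; nra.
  - apply sum_below_le; intros j _; unfold P; rewrite S_INR.
    replace (t0 + h - INR j * h) with (t0 - INR j * h + h) by ring.
    replace (t0 + h - (INR j + 1) * h) with (t0 - INR j * h) by ring.
    now apply window_increment_le.
Qed.

Lemma kernel_grid_sum_ge s d h t0 K a (w : nat -> R) : 0 < s -> 0 < h -> 0 < d ->
  d <= t0 -> t0 - INR K * h <= - d - 2 * h -> 0 <= a ->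
  (forall j, (j < K)%nat -> 0 <= w j) ->
  (forall j, (j < K)%nat -> - d - h <= t0 - INR j * h <= d -> a * h <= w j) ->
  a * (logistic_cdf s d - logistic_cdf s (- d) - h / (4 * s)) <=
  sum_below (fun j => w j * logistic_pdf 0 s (t0 - INR j * h)) K.
Proof.
  intros Hs Hh Hd Htop Hbot Ha Hw0 Hwin.
  apply Rle_trans with (a * sum_below (fun j => window_term s d h (t0 - INR j * h)) K).
  { apply Rmult_le_compat_l; [lra|]; now apply window_sum_ge. }
  rewrite <- sum_below_scal; apply sum_below_le; intros j Hj.
  pose proof (logistic_pdf_pos 0 s (t0 - INR j * h) Hs).
  pose proof (Hw0 j Hj); unfold window_term.
  destruct Rle_dec; [destruct Rle_dec|]; [|nra|nra].
  specialize (Hwin j Hj ltac:(lra)); nra.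
Qed.

(* [c 0] repeated [n 0] times, then [c 1] repeated [n 1] times, ..., up to
   [c (K-1)]; indices past the end get the junk location [0]. *)
Fixpoint replicate_locs (n : nat -> nat) (c : nat -> R) (K i : nat) : R :=
  match K with
  | O => 0
  | S K' => if Nat.ltb i (n O) then c O
            else replicate_locs (fun j => n (S j)) (fun j => c (S j)) K' (i - n O)
  end.

Lemma sum_replicate_locs_ge (g : R -> R) : (forall y, 0 <= g y) ->
  forall K n c T, sum_below (fun j => INR (n j)) K <= INR T ->
  sum_below (fun j => INR (n j) * g (c j)) K <=
  sum_below (fun i => g (replicate_locs n c K i)) T.
Proof.
  intros Hg; induction K as [|K IH]; intros n c T HT.
  { apply sum_below_ge0; intros; apply Hg. }
  rewrite sum_below_succ_l in HT |- *.
  assert (Hrest : 0 <= sum_below (fun i => INR (n (S i))) K)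
    by (apply sum_below_ge0; intros; apply pos_INR).
  assert (HnT : (n O <= T)%nat) by (apply INR_le; lra).
  replace T with (n O + (T - n O))%nat by lia; rewrite sum_below_add.
  rewrite (sum_below_ext _ (fun _ => g (c O)) (n O)), sum_below_const.
  2: { intros i Hi; simpl; now rewrite (proj2 (Nat.ltb_lt i (n O)) Hi). }
  rewrite (sum_below_ext _ (fun i => g (replicate_locs (fun j => n (S j))
                                         (fun j => c (S j)) K i)) (T - n O)).
  2: { intros i _; simpl; rewrite (proj2 (Nat.ltb_ge (n O + i) (n O))) by lia.
       now replace (n O + i - n O)%nat with i by lia. }
  pose proof (IH (fun j => n (S j)) (fun j => c (S j)) (T - n O)%nat) as IHK.
  rewrite minus_INR in IHK by exact HnT; simpl in IHK; lra.
Qed.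

Lemma fN_common_scale N mu s x : (1 <= N)%nat ->
  fN N mu (fun _ => s) x = / INR N * sum_below (fun i => logistic_pdf (mu i) s x) N.
Proof. intros HN; unfold fN; now rewrite sum_f_R0_pred. Qed.

(* Rounding the weights [w j] down to multiples of [1/N] costs at most the
   kernel's maximum [1/(4s)] per weight. *)
Lemma mixture_ge_weighted_sum N s K (w c : nat -> R) : (1 <= N)%nat -> 0 < s ->
  (forall j, 0 <= w j) -> sum_below w K <= 1 ->
  exists mu, forall x,
    sum_below (fun j => w j * logistic_pdf (c j) s x) K - INR K / (4 * s * INR N) <=
    fN N mu (fun _ => s) x.
Proof.
  intros HN Hs Hw Hsum.
  assert (HN0 : 0 < INR N) by (apply lt_0_INR; lia).
  assert (HNw : forall j, 0 <= INR N * w j) by (intros; apply Rmult_le_pos; [lra|apply Hw]).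
  set (n := fun j => proj1_sig (nfloor_ex (INR N * w j) (HNw j))).
  assert (Hn : forall j, INR (n j) <= INR N * w j < INR (n j) + 1)
    by (intros; unfold n; apply proj2_sig).
  exists (replicate_locs n c K); intros x.
  assert (Hcount : sum_below (fun j => INR (n j)) K <= INR N).
  { apply Rle_trans with (sum_below (fun j => INR N * w j) K).
    - apply sum_below_le; intros; apply Hn.
    - rewrite sum_below_scal; nra. }
  pose proof (sum_replicate_locs_ge (fun y => logistic_pdf y s x)
                (fun y => Rlt_le _ _ (logistic_pdf_pos y s x Hs)) K n c N Hcount) as Hrep.
  rewrite fN_common_scale by exact HN.
  apply Rle_trans with (/ INR N * sum_below (fun j => INR (n j) * logistic_pdf (c j) s x) K);
    [|apply Rmult_le_compat_l; [left; now apply Rinv_0_lt_compat|exact Hrep]].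
  rewrite <- sum_below_scal.
  replace (INR K / (4 * s * INR N)) with (sum_below (fun _ => / (4 * s * INR N)) K)
    by (rewrite sum_below_const; unfold Rdiv; ring).
  apply Rplus_le_reg_r with (sum_below (fun _ => / (4 * s * INR N)) K).
  rewrite <- sum_below_plus; ring_simplify; apply sum_below_le; intros j _.
  pose proof (logistic_pdf_pos (c j) s x Hs); pose proof (logistic_pdf_le (c j) s x Hs).
  destruct (Hn j) as [_ Hup].
  assert (Hwj : w j <= (INR (n j) + 1) / INR N)
    by (apply (Rmult_le_reg_l (INR N)); [lra|]; field_simplify; lra).
  apply Rle_trans with ((INR (n j) + 1) / INR N * logistic_pdf (c j) s x);
    [apply Rmult_le_compat_r; lra|].
  replace (/ (4 * s * INR N)) with (/ INR N * / (4 * s)) by (field; lra).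
  unfold Rdiv; rewrite Rmult_plus_distr_r, Rmult_1_l, Rmult_plus_distr_r.
  apply Rplus_le_compat; [right; ring|].
  apply Rmult_le_compat_l; [left; now apply Rinv_0_lt_compat|lra].
Qed.

Lemma fN_pos N mu s x : (1 <= N)%nat -> 0 < s -> 0 < fN N mu (fun _ => s) x.
Proof.
  intros HN Hs; rewrite fN_common_scale by exact HN.
  apply Rmult_lt_0_compat; [apply Rinv_0_lt_compat, lt_0_INR; lia|].
  destruct N as [|N]; [lia|]; simpl.
  pose proof (logistic_pdf_pos (mu N) s x Hs).
  assert (0 <= sum_below (fun i => logistic_pdf (mu i) s x) N)
    by (apply sum_below_ge0; intros; left; now apply logistic_pdf_pos).
  lra.
Qed.

Lemma fN_le N mu s x : (1 <= N)%nat -> 0 < s -> fN N mu (fun _ => s) x <= / (4 * s).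
Proof.
  intros HN Hs; rewrite fN_common_scale by exact HN.
  assert (HN0 : 0 < INR N) by (apply lt_0_INR; lia).
  apply Rle_trans with (/ INR N * sum_below (fun _ => / (4 * s)) N).
  - apply Rmult_le_compat_l; [left; now apply Rinv_0_lt_compat|].
    apply sum_below_le; intros; now apply logistic_pdf_le.
  - rewrite sum_below_const; right; field; lra.
Qed.

Lemma ex_RInt_continuity (f : R -> R) a b : continuity f -> ex_RInt f a b.
Proof.
  intros Hf; apply (ex_RInt_continuous (V := R_CompleteNormedModule)).
  intros; apply continuity_pt_filterlim, Hf.
Qed.

Lemma lower_sum_le_RInt (q : R -> R) u h (lo : nat -> R) K : 0 < h -> continuity q ->
  (forall j, (j < K)%nat -> forall y, u + INR j * h <= y <= u + INR j * h + h -> lo j <= q y) ->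
  sum_below (fun j => h * lo j) K <= RInt q u (u + INR K * h).
Proof.
  intros Hh Hq; induction K as [|K IH]; intros Hlo.
  { simpl; rewrite Rmult_0_l, Rplus_0_r, RInt_point; unfold zero; simpl; lra. }
  simpl sum_below; rewrite S_INR.
  rewrite <- (RInt_Chasles q u (u + INR K * h)) by now apply ex_RInt_continuity.
  assert (sum_below (fun j => h * lo j) K <= RInt q u (u + INR K * h))
    by (apply IH; intros j Hj; apply Hlo; lia).
  assert (h * lo K <= RInt q (u + INR K * h) (u + (INR K + 1) * h)).
  { replace (h * lo K) with (RInt (fun _ => lo K) (u + INR K * h) (u + (INR K + 1) * h))
      by (rewrite RInt_const; unfold scal; simpl; unfold mult; simpl; ring).
    apply RInt_le; [nra|apply ex_RInt_const|now apply ex_RInt_continuity|].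
    intros y Hy; apply (Hlo K); [lia|lra]. }
  unfold plus; simpl; lra.
Qed.

Lemma RInt_of_support (q : R -> R) A B u v : continuity q ->
  (forall x, x < A \/ B < x -> q x = 0) -> u <= A <= B -> B <= v ->
  RInt q u v = RInt q A B.
Proof.
  intros Hq Hout HuA HB.
  assert (Hzero : forall a b, a <= b -> (forall x, a < x < b -> q x = 0) -> RInt q a b = 0).
  { intros a b Hab Hz; rewrite (RInt_ext q (fun _ => 0)).
    - rewrite RInt_const; unfold scal; simpl; unfold mult; simpl; ring.
    - intros x Hx; rewrite Rmin_left, Rmax_right in Hx by lra; apply Hz; lra. }
  rewrite <- (RInt_Chasles q u A v), <- (RInt_Chasles q A B v)
    by now apply ex_RInt_continuity.
  rewrite (Hzero u A), (Hzero B v) by (lra || (intros; apply Hout; lra)).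
  unfold plus; simpl; ring.
Qed.

Lemma grid_weights_sum_le (q : R -> R) A B om rho h K :
  continuity q -> (forall x, 0 <= q x) -> (forall x, x < A \/ B < x -> q x = 0) ->
  A <= B -> RInt q A B <= 1 -> 0 < h < rho ->
  (forall x y, A - 2 <= x <= B + 2 -> A - 2 <= y <= B + 2 -> Rabs (x - y) < rho ->
     Rabs (q x - q y) < om) ->
  B <= A - 1 + INR K * h <= B + 2 ->
  sum_below (fun j => h * Rmax 0 (q (A - 1 + INR j * h) - om)) K <= 1.
Proof.
  intros Hq Hq0 Hout HAB Hmass Hh Hmod HK.
  rewrite <- (RInt_of_support q A B (A - 1) (A - 1 + INR K * h)) in Hmass by (auto; lra).
  eapply Rle_trans; [|exact Hmass].
  apply lower_sum_le_RInt; [lra|exact Hq|]; intros j Hj y Hy.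
  apply Rmax_lub; [apply Hq0|].
  assert (Hj1 : (INR j + 1) * h <= INR K * h)
    by (apply Rmult_le_compat_r; [lra|]; rewrite <- S_INR; apply le_INR; lia).
  pose proof (pos_INR j).
  assert (Hclose : Rabs (q (A - 1 + INR j * h) - q y) < om)
    by (apply Hmod; try split; try nra; rewrite Rabs_left1; nra).
  apply Rabs_def2 in Hclose; lra.
Qed.

Lemma sampled_kernel_sum_ge (q : R -> R) A B om rho s d h K x :
  0 < s -> 0 < d -> 0 < h <= d / 2 -> d <= 1 / 4 -> 2 * d < rho ->
  (forall x y, A - 2 <= x <= B + 2 -> A - 2 <= y <= B + 2 -> Rabs (x - y) < rho ->
     Rabs (q x - q y) < om) ->
  A <= x <= B -> B - A + 2 < INR K * h -> 2 * om <= q x ->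
  (q x - 2 * om) * (logistic_cdf s d - logistic_cdf s (- d) - h / (4 * s)) <=
  sum_below (fun j => h * Rmax 0 (q (A - 1 + INR j * h) - om) *
                      logistic_pdf (A - 1 + INR j * h) s x) K.
Proof.
  intros Hs Hd Hh Hd1 Hrho Hmod HxAB HK Hqx.
  set (w := fun j => h * Rmax 0 (q (A - 1 + INR j * h) - om)).
  rewrite (sum_below_ext _ (fun j => w j * logistic_pdf 0 s (x - (A - 1) - INR j * h)))
    by (intros j _; rewrite (logistic_pdf_shift (A - 1 + INR j * h));
        now replace (x - (A - 1 + INR j * h)) with (x - (A - 1) - INR j * h) by ring).
  apply kernel_grid_sum_ge; try lra.
  - intros; apply Rmult_le_pos; [lra|apply Rmax_l].
  - intros j _ Hj.
    assert (Hclose : Rabs (x - (A - 1 + INR j * h)) < rho) by (apply Rabs_def1; lra).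
    specialize (Hmod x (A - 1 + INR j * h) ltac:(lra) ltac:(lra) Hclose).
    apply Rabs_def2 in Hmod.
    unfold w; rewrite Rmult_comm; apply Rmult_le_compat_l; [lra|].
    eapply Rle_trans; [|apply Rmax_r]; lra.
Qed.

Lemma exists_grid_length L h : 0 <= L -> 0 < h -> exists K, L < INR K * h <= L + h.
Proof.
  intros HL Hh; destruct (nfloor_ex (L / h)) as [k Hk]; [apply Rdiv_le_0_compat; lra|].
  exists (S k); rewrite S_INR.
  replace L with (L / h * h) by (field; lra); split; nra.
Qed.

Lemma exists_nat_ge r : exists N, (1 <= N)%nat /\ r <= INR N.
Proof.
  destruct (nfloor_ex (Rmax 0 r) (Rmax_l 0 r)) as [n Hn].
  exists (S n); split; [lia|]; rewrite S_INR; pose proof (Rmax_r 0 r); lra.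
Qed.

(* [tau] bounds both the relative mass of a bump outside the window [-d, d]
   and the discretization error [h/(4s)]. *)
Lemma logistic_mixture_lower_approx (q : R -> R) A B eta :
  A <= B -> 0 < eta -> continuity q -> (forall x, 0 <= q x) ->
  (forall x, x < A \/ B < x -> q x = 0) -> RInt q A B <= 1 ->
  exists N mu s, (1 <= N)%nat /\ 0 < s /\
    forall x, q x - eta <= fN N mu (fun _ => s) x.
Proof.
  intros HAB Heta Hq Hq0 Hout Hmass.
  destruct (continuity_ab_maj q A B HAB (fun c _ => Hq c)) as [xmax [Hmax _]].
  set (Q := q xmax).
  assert (HQ : forall x, q x <= Q).
  { intros x; destruct (Rle_dec A x), (Rle_dec x B);
      try (rewrite Hout by lra; apply Hq0); apply Hmax; lra. }
  assert (HQ0 : 0 <= Q) by apply Hq0.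
  set (om := eta / 4).
  destruct (Heine_cor2 (f := q) (a := A - 2) (b := B + 2) (fun x _ => Hq x)
              (mkposreal om ltac:(unfold om; lra))) as [[rho Hrho] Hmod]; simpl in Hmod.
  set (tau := eta / (8 * (Q + 1))).
  assert (Htau : 0 < tau) by (apply Rdiv_lt_0_compat; lra).
  set (d := Rmin (rho / 4) (1 / 4)).
  assert (Hd : 0 < d <= rho / 4 /\ d <= 1 / 4)
    by (unfold d; split; [split; [apply Rmin_glb_lt|apply Rmin_l]|apply Rmin_r]; lra).
  set (s := d * tau / 4).
  assert (Hs : 0 < s) by (unfold s; nra).
  set (h := Rmin (d / 2) (tau * s)).
  assert (Hh : 0 < h <= d / 2 /\ h <= tau * s)
    by (unfold h; split; [split; [apply Rmin_glb_lt|apply Rmin_l]|apply Rmin_r]; nra).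
  destruct (exists_grid_length (B - A + 2) h) as [K HK]; [lra|lra|].
  destruct (exists_nat_ge (INR K / (s * eta))) as [N [HN HNK]].
  assert (HKN : INR K / (4 * s * INR N) <= eta / 4).
  { assert (0 < INR N) by (apply lt_0_INR; lia).
    apply (Rmult_le_reg_r (4 * s * INR N)); [nra|].
    replace (INR K / (4 * s * INR N) * (4 * s * INR N)) with (INR K) by (field; nra).
    replace (INR K) with (INR K / (s * eta) * (s * eta)) by (field; nra).
    apply Rle_trans with (INR N * (s * eta)); [apply Rmult_le_compat_r; nra|right; field]. }
  set (w := fun j => h * Rmax 0 (q (A - 1 + INR j * h) - om)).
  assert (Hw0 : forall j, 0 <= w j) by (intros; apply Rmult_le_pos; [lra|apply Rmax_l]).
  assert (Hw : sum_below w K <= 1)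
    by (apply (grid_weights_sum_le q A B om rho); auto; lra).
  destruct (mixture_ge_weighted_sum N s K w (fun j => A - 1 + INR j * h) HN Hs Hw0 Hw)
    as [mu Hmu].
  exists N, mu, s; split; [exact HN|split; [exact Hs|]]; intros x.
  pose proof (fN_pos N mu s x HN Hs).
  destruct (Rle_dec (q x) (2 * om)) as [Hsmall|Hbig]; [unfold om in Hsmall; lra|].
  assert (HxAB : A <= x <= B)
    by (split; apply Rnot_lt_le; intros Hx; rewrite Hout in Hbig by lra; unfold om in Hbig; lra).
  pose proof (sampled_kernel_sum_ge q A B om rho s d h K x Hs ltac:(lra) ltac:(lra)
                ltac:(lra) ltac:(lra) Hmod HxAB ltac:(lra) ltac:(lra)).
  pose proof (logistic_cdf_central_mass s d tau Hs ltac:(lra) ltac:(unfold s; lra)).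
  assert (h / (4 * s) <= tau / 4)
    by (apply (Rmult_le_reg_r (4 * s)); [lra|]; field_simplify; lra).
  assert (tau * Q <= eta / 8)
    by (apply (Rmult_le_reg_r (8 * (Q + 1))); [lra|]; unfold tau; field_simplify; nra).
  specialize (Hmu x); specialize (HQ x); unfold w, om in *; nra.
Qed.

Definition near (X : R -> Prop) (r x : R) : Prop := exists y, X y /\ Rabs (x - y) < r.

Definition cutoff (X : R -> Prop) (d : R) (phi : R -> R) : Prop :=
  continuity phi /\ (forall x, 0 <= phi x <= 1) /\ (forall x, X x -> phi x = 1) /\
  (forall x, (forall y, X y -> d <= Rabs (x - y)) -> phi x = 0).

Definition cutoff_limit (X : R -> Prop) (a b : R) (g : R -> R) (v : R) : Prop :=
  forall eps, 0 < eps -> exists d, 0 < d /\ forall phi, cutoff X d phi ->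
    ex_RInt (fun x => phi x * g x) a b /\ Rabs (RInt (fun x => phi x * g x) a b - v) < eps.

Lemma IntegralOn_iff_cutoff_limit X g v : IntegralOn X g v <->
  exists a b, (forall x, X x -> a + 1 <= x <= b - 1) /\ cutoff_limit X a b g v.
Proof.
  unfold IntegralOn, cutoff_limit, cutoff;
    split; intros [a [b [HX Hlim]]]; exists a, b; split; auto;
    intros e He; destruct (Hlim e He) as [d [Hd Hphi]]; exists d; split; auto.
  - intros phi (H1 & H2 & H3 & H4); destruct (Hphi phi H1 H2 H3 H4) as [pr Hpr].
    split; [now apply ex_RInt_Reals_1|now rewrite (RInt_Reals _ _ _ pr)].
  - intros phi H1 H2 H3 H4; destruct (Hphi phi (conj H1 (conj H2 (conj H3 H4)))) as [Hex Hv].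
    exists (ex_RInt_Reals_0 _ _ _ Hex); now rewrite <- RInt_Reals.
Qed.

(* With no point in [X] any bounds [a, b] are admissible; [a = b] makes every
   integral vanish. *)
Lemma IntegralOn_empty X g : ~ (exists x, X x) -> IntegralOn X g 0.
Proof.
  intros Hempty; exists 0, 0; split; [intros x Hx; exfalso; eauto|].
  intros e He; exists 1; split; [lra|]; intros phi _ _ _ _.
  exists (RiemannInt_P7 (fun x => phi x * g x) 0).
  rewrite RiemannInt_P9, Rminus_0_r, Rabs_R0; exact He.
Qed.

Lemma near_triangle X d e x y : near X d y -> Rabs (x - y) < e -> near X (d + e) x.
Proof.
  intros [z [Hz Hyz]] Hxy; exists z; split; [exact Hz|].
  replace (x - z) with ((x - y) + (y - z)) by ring.
  eapply Rle_lt_trans; [apply Rabs_triang|lra].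
Qed.

Lemma near_mono X r r' x : r <= r' -> near X r x -> near X r' x.
Proof. intros Hr [y [Hy Hxy]]; exists y; split; [exact Hy|lra]. Qed.

Lemma cutoff_vanishes X d phi x : cutoff X d phi -> ~ near X d x -> phi x = 0.
Proof.
  intros (_ & _ & _ & Hfar) Hx; apply Hfar; intros y Hy.
  apply Rnot_lt_le; intros Hxy; apply Hx; now exists y.
Qed.

Lemma cutoff_mono X d d' phi : d <= d' -> cutoff X d phi -> cutoff X d' phi.
Proof.
  intros Hdd (H1 & H2 & H3 & H4); split; [exact H1|split; [exact H2|split; [exact H3|]]].
  intros x Hx; apply H4; intros y Hy; specialize (Hx y Hy); lra.
Qed.

Lemma cutoff_mult X d phi psi : cutoff X d phi -> cutoff X d psi ->
  cutoff X d (fun x => phi x * psi x).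
Proof.
  intros (C1 & B1 & I1 & F1) (C2 & B2 & I2 & F2); split; [|split; [|split]].
  - intros x; now apply continuity_pt_mult.
  - intros x; specialize (B1 x); specialize (B2 x); split; nra.
  - intros x Hx; rewrite I1, I2; auto; ring.
  - intros x Hx; rewrite F1; auto; ring.
Qed.

(* Away from [near X r], a cutoff of radius [d <= r/2] vanishes on a whole ball,
   so the product is continuous there whatever [h] does. *)
Lemma cutoff_mult_continuous X d r phi h : 0 < d -> 2 * d <= r -> cutoff X d phi ->
  (forall x, near X r x -> continuity_pt h x) -> continuity (fun x => phi x * h x).
Proof.
  intros Hd Hdr Hphi Hh x.
  destruct (classic (near X r x)) as [Hx|Hx].
  { apply continuity_pt_mult; [apply Hphi|now apply Hh]. }
  apply (continuity_pt_locally_ext (fun _ => 0) _ d);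
    [exact Hd| |apply continuity_pt_const; now intros ? ?].
  intros y Hy; unfold Rdist in Hy; rewrite (cutoff_vanishes X d phi y Hphi); [ring|].
  intros Hny; apply Hx, (near_mono X (d + d)); [lra|].
  apply (near_triangle X d d x y Hny); now rewrite Rabs_minus_sym.
Qed.

Lemma lipschitz_continuity (f : R -> R) L : 0 <= L ->
  (forall x z, Rabs (f x - f z) <= L * Rabs (x - z)) -> continuity f.
Proof.
  intros HL Hf x e He; exists (e / (L + 1)); split; [apply Rdiv_lt_0_compat; lra|].
  intros z [_ Hz]; simpl in *; unfold Rdist in *.
  eapply Rle_lt_trans; [apply Hf|].
  apply Rle_lt_trans with (L * (e / (L + 1))); [apply Rmult_le_compat_l; lra|].
  apply (Rmult_lt_reg_r (L + 1)); [lra|].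
  replace (L * (e / (L + 1)) * (L + 1)) with (L * e) by (field; lra); nra.
Qed.

Lemma clamp_lipschitz lo hi a b : lo <= hi ->
  Rabs (clamp lo hi a - clamp lo hi b) <= Rabs (a - b).
Proof.
  intros; unfold clamp, Rmax, Rmin, Rabs.
  repeat destruct Rle_dec; repeat destruct Rcase_abs; lra.
Qed.

(* The distance to [X], obtained as minus the supremum of [- |x - y|] over [y] in [X]. *)
Lemma exists_dist_fun (X : R -> Prop) : (exists x0, X x0) ->
  exists D : R -> R, (forall x y, X y -> D x <= Rabs (x - y)) /\
                     (forall x e, D x < e -> near X e x).
Proof.
  intros [x0 Hx0].
  assert (Hsup : forall x, {m | is_lub (fun v => exists y, X y /\ v = - Rabs (x - y)) m}).
  { intros x; apply completeness.
    - exists 0; intros v [y [_ ->]]; pose proof (Rabs_pos (x - y)); lra.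
    - exists (- Rabs (x - x0)), x0; auto. }
  exists (fun x => - proj1_sig (Hsup x)); split.
  - intros x y Hy; destruct (proj2_sig (Hsup x)) as [Hub _].
    assert (- Rabs (x - y) <= proj1_sig (Hsup x)) by (apply Hub; now exists y); lra.
  - intros x e He; destruct (proj2_sig (Hsup x)) as [_ Hleast].
    apply NNPP; intros Hfar.
    assert (proj1_sig (Hsup x) <= - e); [|lra].
    apply Hleast; intros v [y [Hy Hv]]; rewrite Hv.
    apply Ropp_le_contravar, Rnot_lt_le; intros Hxy; apply Hfar; now exists y.
Qed.

Lemma dist_fun_lipschitz (X : R -> Prop) (D : R -> R) :
  (forall x y, X y -> D x <= Rabs (x - y)) -> (forall x e, D x < e -> near X e x) ->
  forall x z, Rabs (D x - D z) <= Rabs (x - z).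
Proof.
  intros Hle Hnear.
  assert (Hone : forall x z, D x <= Rabs (x - z) + D z).
  { intros x z; apply Rnot_lt_le; intros Hlt.
    destruct (Hnear z (D x - Rabs (x - z)) ltac:(lra)) as [y [Hy Hzy]].
    pose proof (Hle x y Hy) as Hxy.
    replace (x - y) with ((x - z) + (z - y)) in Hxy by ring.
    pose proof (Rabs_triang (x - z) (z - y)); lra. }
  intros x z; pose proof (Hone x z); pose proof (Hone z x) as Hzx.
  rewrite Rabs_minus_sym in Hzx; apply Rabs_le; lra.
Qed.

Lemma cutoff_exists X d : 0 < d ->
  exists phi, cutoff X d phi /\ forall x, near X (d / 2) x -> phi x = 1.
Proof.
  intros Hd; destruct (classic (exists x0, X x0)) as [Hne|Hempty].
  2: { exists (fun _ => 0); split; [split; [|split; [|split]]|].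
       - intros x; apply continuity_pt_const; now intros ? ?.
       - intros; lra.
       - intros x Hx; exfalso; eauto.
       - reflexivity.
       - intros x [y [Hy _]]; exfalso; eauto. }
  destruct (exists_dist_fun X Hne) as [D [Hle Hnear]].
  pose proof (dist_fun_lipschitz X D Hle Hnear) as Hlip.
  exists (fun x => clamp 0 1 (2 - 2 * D x / d)); split; [split; [|split; [|split]]|].
  - apply (lipschitz_continuity _ (2 / d)); [left; apply Rdiv_lt_0_compat; lra|].
    intros x z; eapply Rle_trans; [apply clamp_lipschitz; lra|].
    replace (2 - 2 * D x / d - (2 - 2 * D z / d)) with (2 / d * (D z - D x)) by (field; lra).
    rewrite Rabs_mult, Rabs_right, Rabs_minus_sym by (left; apply Rdiv_lt_0_compat; lra).
    apply Rmult_le_compat_l; [left; apply Rdiv_lt_0_compat; lra|apply Hlip].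
  - intros x; apply clamp_bounds; lra.
  - intros x Hx; apply clamp_hi; [lra|].
    pose proof (Hle x x Hx) as HDx; rewrite Rminus_diag, Rabs_R0 in HDx.
    assert (D x / d <= 0) by (apply Rmult_le_0_r; [lra|left; apply Rinv_0_lt_compat; lra]).
    unfold Rdiv in *; lra.
  - intros x Hx; apply clamp_lo; [lra|].
    assert (d <= D x).
    { apply Rnot_lt_le; intros Hlt; destruct (Hnear x d Hlt) as [y [Hy Hxy]].
      specialize (Hx y Hy); lra. }
    assert (1 <= D x / d) by (apply (Rmult_le_reg_r d); [lra|]; field_simplify; lra).
    unfold Rdiv in *; lra.
  - intros x [y [Hy Hxy]]; apply clamp_hi; [lra|].
    pose proof (Hle x y Hy).
    assert (D x / d <= 1 / 2) by (apply (Rmult_le_reg_r d); [lra|]; field_simplify; lra).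
    unfold Rdiv in *; lra.
Qed.

Lemma RInt_comb (f g : R -> R) a b l : ex_RInt f a b -> ex_RInt g a b ->
  RInt (fun x => f x + l * g x) a b = RInt f a b + l * RInt g a b.
Proof.
  intros Hf Hg.
  rewrite (RInt_plus (V := R_CompleteNormedModule) f (fun x => l * g x))
    by (auto; now apply (ex_RInt_scal (V := R_NormedModule))).
  now rewrite (RInt_scal (V := R_CompleteNormedModule) g).
Qed.

Lemma Rabs_sub_le_mix u v : 0 <= u <= 1 -> 0 <= v <= 1 -> Rabs (u - v) <= u + v - 2 * (u * v).
Proof. intros; unfold Rabs; destruct Rcase_abs; nra. Qed.

(* Stated in the shape produced by [RInt_comb]; the right side has small
   [p]-integral because [phi1 phi2] is again a cutoff. *)
Lemma cutoff_diff_le X d r M p h phi1 phi2 x : d <= r ->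
  cutoff X d phi1 -> cutoff X d phi2 -> (near X r x -> Rabs (h x) <= M * p x) ->
  Rabs (phi1 x * h x + -1 * (phi2 x * h x)) <=
  M * ((phi1 x * p x + 1 * (phi2 x * p x)) + (-2) * (phi1 x * phi2 x * p x)).
Proof.
  intros Hdr H1 H2 Hh.
  destruct (classic (near X r x)) as [Hx|Hx].
  - pose proof (Rabs_sub_le_mix _ _ (proj1 (proj2 H1) x) (proj1 (proj2 H2) x)).
    replace (phi1 x * h x + -1 * (phi2 x * h x)) with ((phi1 x - phi2 x) * h x) by ring.
    rewrite Rabs_mult; pose proof (Rabs_pos (phi1 x - phi2 x)); pose proof (Rabs_pos (h x)).
    specialize (Hh Hx); nra.
  - assert (Hfar : ~ near X d x) by (intros Hn; apply Hx; now apply (near_mono X d)).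
    rewrite (cutoff_vanishes X d phi1 x), (cutoff_vanishes X d phi2 x) by assumption.
    rewrite !Rmult_0_l, Rmult_0_r, Rplus_0_r, Rabs_R0; lra.
Qed.

Lemma cutoff_integrals_cauchy X a b p h r M : a <= b -> 0 < r -> 0 <= M ->
  cutoff_limit X a b p 1 ->
  (forall x, near X r x -> continuity_pt h x /\ Rabs (h x) <= M * p x) ->
  forall e, 0 < e -> exists d, 0 < d /\ 2 * d <= r /\
    forall phi1 phi2, cutoff X d phi1 -> cutoff X d phi2 ->
      Rabs (RInt (fun x => phi1 x * h x) a b - RInt (fun x => phi2 x * h x) a b) < e.
Proof.
  intros Hab Hr HM Hplim Hh e He.
  set (e0 := e / (4 * (M + 1))).
  destruct (Hplim e0 ltac:(unfold e0; apply Rdiv_lt_0_compat; lra)) as [d0 [Hd0 Hd0p]].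
  set (d := Rmin d0 (r / 2)).
  assert (Hd : 0 < d /\ d <= d0 /\ 2 * d <= r)
    by (unfold d; pose proof (Rmin_l d0 (r / 2)); pose proof (Rmin_r d0 (r / 2));
        split; [apply Rmin_glb_lt|]; lra).
  exists d; split; [apply Hd|split; [apply Hd|]]; intros phi1 phi2 H1 H2.
  assert (Hhc : forall x, near X r x -> continuity_pt h x) by (intros; now apply Hh).
  pose proof (cutoff_mult_continuous X d r phi1 h (proj1 Hd) (proj2 (proj2 Hd)) H1 Hhc) as C1.
  pose proof (cutoff_mult_continuous X d r phi2 h (proj1 Hd) (proj2 (proj2 Hd)) H2 Hhc) as C2.
  destruct (Hd0p phi1 (cutoff_mono X d d0 phi1 (proj1 (proj2 Hd)) H1)) as [E1 J1].
  destruct (Hd0p phi2 (cutoff_mono X d d0 phi2 (proj1 (proj2 Hd)) H2)) as [E2 J2].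
  destruct (Hd0p _ (cutoff_mono X d d0 _ (proj1 (proj2 Hd)) (cutoff_mult X d _ _ H1 H2)))
    as [E12 J12].
  apply Rabs_def2 in J1; apply Rabs_def2 in J2; apply Rabs_def2 in J12.
  set (g := fun x => (phi1 x * p x + 1 * (phi2 x * p x)) + (-2) * (phi1 x * phi2 x * p x)).
  assert (Eg_inner : ex_RInt (fun x => phi1 x * p x + 1 * (phi2 x * p x)) a b)
    by (apply (ex_RInt_plus (V := R_NormedModule)); auto;
        now apply (ex_RInt_scal (V := R_NormedModule))).
  assert (Eg : ex_RInt g a b)
    by (apply (ex_RInt_plus (V := R_NormedModule)); auto;
        now apply (ex_RInt_scal (V := R_NormedModule))).
  assert (Ig : RInt (fun x => M * g x) a b =
               M * (RInt (fun x => phi1 x * p x) a b + RInt (fun x => phi2 x * p x) a b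
                    - 2 * RInt (fun x => phi1 x * phi2 x * p x) a b) :> R).
  { transitivity (M * RInt g a b); [exact (RInt_scal (V := R_CompleteNormedModule) g a b M Eg)|].
    unfold g; rewrite (RInt_comb _ _ a b (-2) Eg_inner E12), RInt_comb by assumption; ring. }
  assert (Idiff : RInt (fun x => phi1 x * h x + -1 * (phi2 x * h x)) a b =
                  RInt (fun x => phi1 x * h x) a b - RInt (fun x => phi2 x * h x) a b :> R)
    by (rewrite RInt_comb by (now apply ex_RInt_continuity); ring).
  assert (Cdiff : continuity (fun x => phi1 x * h x + -1 * (phi2 x * h x)))
    by (apply continuity_plus; [exact C1|apply continuity_scal, C2]).
  rewrite <- Idiff.
  eapply Rle_lt_trans; [apply abs_RInt_le; [exact Hab|now apply ex_RInt_continuity]|].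
  apply Rle_lt_trans with (RInt (fun x => M * g x) a b).
  - apply RInt_le; [exact Hab| | |intros x _; apply (cutoff_diff_le X d r); auto; [lra|apply Hh]].
    + apply ex_RInt_continuity; intros x; apply (continuity_pt_comp _ Rabs);
        [apply Cdiff|apply Rcontinuity_abs].
    + now apply (ex_RInt_scal (V := R_NormedModule)).
  - rewrite Ig; apply Rle_lt_trans with (M * (4 * e0)); [apply Rmult_le_compat_l; lra|].
    unfold e0; apply (Rmult_lt_reg_r (M + 1)); [lra|].
    replace (M * (4 * (e / (4 * (M + 1)))) * (M + 1)) with (M * e) by (field; lra); nra.
Qed.

Lemma ball_R x (e : R) y : ball x e y <-> Rabs (y - x) < e.
Proof. reflexivity. Qed.

(* The cutoff integrals, filtered by "eventually as the cutoff radius shrinks",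
   form a Cauchy filter, which converges by completeness of [R]. *)
Lemma cutoff_limit_of_cauchy X a b h r : 0 < r ->
  (forall x, near X r x -> continuity_pt h x) ->
  (forall e, 0 < e -> exists d, 0 < d /\ 2 * d <= r /\
     forall phi1 phi2, cutoff X d phi1 -> cutoff X d phi2 ->
       Rabs (RInt (fun x => phi1 x * h x) a b - RInt (fun x => phi2 x * h x) a b) < e) ->
  exists v, cutoff_limit X a b h v.
Proof.
  intros Hr Hh Hcauchy.
  set (F := fun P : R -> Prop => exists d, 0 < d /\
              forall phi, cutoff X d phi -> P (RInt (fun x => phi x * h x) a b)).
  assert (HF : ProperFilter F).
  { constructor; [|constructor].
    - intros P [d [Hd HP]]; destruct (cutoff_exists X d Hd) as [phi [Hphi _]].
      eexists; apply HP, Hphi.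
    - exists 1; split; [lra|auto].
    - intros P Q [d1 [Hd1 HP]] [d2 [Hd2 HQ]]; exists (Rmin d1 d2).
      split; [now apply Rmin_glb_lt|intros phi Hphi; split].
      + apply HP, (cutoff_mono X (Rmin d1 d2)); [apply Rmin_l|exact Hphi].
      + apply HQ, (cutoff_mono X (Rmin d1 d2)); [apply Rmin_r|exact Hphi].
    - intros P Q HPQ [d [Hd HP]]; exists d; split; auto. }
  assert (HFc : forall eps : posreal, exists x, F (ball x eps)).
  { intros [e He]; destruct (Hcauchy e He) as [d [Hd [_ Hd']]].
    destruct (cutoff_exists X d Hd) as [phi0 [Hphi0 _]].
    exists (RInt (fun x => phi0 x * h x) a b), d; split; [exact Hd|].
    intros phi Hphi; apply ball_R; now apply Hd'. }
  exists (R_complete_lim F); intros e He.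
  destruct (R_complete F HF HFc (mkposreal e He)) as [d [Hd Hball]].
  exists (Rmin d (r / 2)); split; [apply Rmin_glb_lt; lra|intros phi Hphi]; split.
  - apply ex_RInt_continuity, (cutoff_mult_continuous X (Rmin d (r / 2)) r);
      auto; [apply Rmin_glb_lt; lra|pose proof (Rmin_r d (r / 2)); lra].
  - apply ball_R, Hball, (cutoff_mono X (Rmin d (r / 2))); [apply Rmin_l|exact Hphi].
Qed.

Lemma cutoff_limit_le X a b p h r c v : a <= b -> 0 < r -> 0 <= c ->
  cutoff_limit X a b h v -> cutoff_limit X a b p 1 ->
  (forall x, near X r x -> continuity_pt h x /\ h x <= c * p x) -> v <= c.
Proof.
  intros Hab Hr Hc Hhlim Hplim Hh.
  apply Rle_plus_epsilon; intros eps Heps.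
  set (e := eps / (c + 2)).
  assert (He : 0 < e) by (apply Rdiv_lt_0_compat; lra).
  destruct (Hhlim e He) as [d1 [Hd1 H1]]; destruct (Hplim e He) as [d2 [Hd2 H2]].
  set (d := Rmin (Rmin d1 d2) (r / 2)).
  assert (Hd : 0 < d) by (repeat apply Rmin_glb_lt; lra).
  assert (Hdr : 2 * d <= r) by (pose proof (Rmin_r (Rmin d1 d2) (r / 2)); unfold d; lra).
  assert (Hd1' : d <= d1) by (unfold d; eapply Rle_trans; apply Rmin_l).
  assert (Hd2' : d <= d2) by (unfold d; eapply Rle_trans; [apply Rmin_l|apply Rmin_r]).
  destruct (cutoff_exists X d Hd) as [phi [Hphi _]].
  destruct (H1 phi (cutoff_mono X d d1 phi Hd1' Hphi)) as [Eh Ih].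
  destruct (H2 phi (cutoff_mono X d d2 phi Hd2' Hphi)) as [Ep Ip].
  apply Rabs_def2 in Ih; apply Rabs_def2 in Ip.
  assert (Hle : RInt (fun x => phi x * h x) a b <= RInt (fun x => c * (phi x * p x)) a b).
  { apply RInt_le; auto; [now apply (ex_RInt_scal (V := R_NormedModule))|intros x _].
    destruct (classic (near X r x)) as [Hx|Hx].
    - pose proof (proj1 (proj2 Hphi) x); specialize (Hh x Hx); nra.
    - rewrite (cutoff_vanishes X d phi x Hphi)
        by (intros Hn; apply Hx; apply (near_mono X d); [lra|exact Hn]).
      lra. }
  assert (Escal : RInt (fun x => c * (phi x * p x)) a b = c * RInt (fun x => phi x * p x) a b :> R)
    by exact (RInt_scal (V := R_CompleteNormedModule) _ a b c Ep).
  assert (c * e + e <= eps)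
    by (unfold e; apply (Rmult_le_reg_r (c + 2)); [lra|]; field_simplify; nra).
  nra.
Qed.

Lemma IntegralOn_exists_le X a b p h r M c :
  (forall x, X x -> a + 1 <= x <= b - 1) -> a <= b -> 0 < r -> 0 <= M -> 0 <= c ->
  cutoff_limit X a b p 1 ->
  (forall x, near X r x -> continuity_pt h x /\ Rabs (h x) <= M * p x /\ h x <= c * p x) ->
  exists v, IntegralOn X h v /\ v <= c.
Proof.
  intros HX Hab Hr HM Hc Hplim Hh.
  destruct (cutoff_limit_of_cauchy X a b h r Hr (fun x Hx => proj1 (Hh x Hx))) as [v Hv].
  { apply (cutoff_integrals_cauchy X a b p h r M); auto.
    intros x Hx; split; apply Hh, Hx. }
  exists v; split.
  - apply IntegralOn_iff_cutoff_limit; now exists a, b.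
  - apply (cutoff_limit_le X a b p h r c v); auto.
    intros x Hx; split; apply Hh, Hx.
Qed.

Lemma density_ge_near X a b p m : continuity p -> 0 < m ->
  (forall x, X x -> a + 1 <= x <= b - 1) -> (forall x, X x -> m <= p x) ->
  exists r, 0 < r /\ forall x, near X r x -> m / 2 <= p x.
Proof.
  intros Hp Hm HX Hpm.
  destruct (Heine_cor2 (f := p) (a := a) (b := b) (fun x _ => Hp x)
              (mkposreal (m / 2) ltac:(lra))) as [[rho Hrho] Hmod]; simpl in Hmod.
  exists (Rmin rho 1); split; [apply Rmin_glb_lt; lra|].
  intros x [y [Hy Hxy]]; pose proof (Rmin_l rho 1); pose proof (Rmin_r rho 1).
  pose proof (HX y Hy); pose proof (Hpm y Hy); apply Rabs_def2 in Hxy.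
  assert (Hclose : Rabs (p x - p y) < m / 2) by (apply Hmod; try apply Rabs_def1; lra).
  apply Rabs_def2 in Hclose; lra.
Qed.

(* Apply the approximation to [q = psi p / (1 + e0)], a cut-off copy of [p]
   with mass at most [1]; near [X] it equals [(1 + theta)/2 * p], and the
   approximation error [m (1 - theta)/4] is absorbed because [p >= m] there. *)
Lemma logistic_mixture_ge_near X a b p m r0 theta :
  continuity p -> (forall x, X x -> a + 1 <= x <= b - 1) -> a <= b ->
  cutoff_limit X a b p 1 -> 0 < m -> 0 < r0 -> (forall x, near X r0 x -> m <= p x) ->
  0 < theta < 1 ->
  exists N mu s r, (1 <= N)%nat /\ 0 < s /\ 0 < r /\
    forall x, near X r x -> theta * p x <= fN N mu (fun _ => s) x.
Proof.
  intros Hp HX Hab Hplim Hm Hr0 Hpm Htheta.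
  set (e0 := (1 - theta) / (1 + theta)).
  assert (He0 : 0 < e0) by (apply Rdiv_lt_0_compat; lra).
  destruct (Hplim e0 He0) as [d0 [Hd0 Hd0p]].
  set (d := Rmin d0 (Rmin r0 1)).
  assert (Hd : 0 < d /\ d <= d0 /\ d <= r0 /\ d <= 1).
  { unfold d; pose proof (Rmin_l d0 (Rmin r0 1)); pose proof (Rmin_r d0 (Rmin r0 1)).
    pose proof (Rmin_l r0 1); pose proof (Rmin_r r0 1).
    split; [repeat apply Rmin_glb_lt; lra|lra]. }
  destruct (cutoff_exists X d (proj1 Hd)) as [psi [Hpsi Hpsi1]].
  destruct (Hd0p psi (cutoff_mono X d d0 psi (proj1 (proj2 Hd)) Hpsi)) as [Ep Ip].
  apply Rabs_def2 in Ip.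
  set (q := fun x => / (1 + e0) * (psi x * p x)).
  assert (Hq0 : forall x, 0 <= q x).
  { intros x; apply Rmult_le_pos; [left; apply Rinv_0_lt_compat; lra|].
    destruct (classic (near X d x)) as [Hx|Hx].
    - pose proof (proj1 (proj2 Hpsi) x).
      pose proof (Hpm x (near_mono X d r0 x (proj1 (proj2 (proj2 Hd))) Hx)); nra.
    - rewrite (cutoff_vanishes X d psi x Hpsi Hx); lra. }
  assert (Hqout : forall x, x < a \/ b < x -> q x = 0).
  { intros x Hx; unfold q; rewrite (cutoff_vanishes X d psi x Hpsi); [ring|].
    intros [y [Hy Hxy]]; apply Rabs_def2 in Hxy; pose proof (HX y Hy); lra. }
  assert (Hmass : RInt q a b <= 1).
  { unfold q; rewrite (RInt_scal (V := R_CompleteNormedModule) _ a b _ Ep).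
    unfold scal; simpl; unfold mult; simpl.
    apply Rle_trans with (/ (1 + e0) * (1 + e0)); [|right; field; lra].
    apply Rmult_le_compat_l; [left; apply Rinv_0_lt_compat|]; lra. }
  destruct (logistic_mixture_lower_approx q a b (m * (1 - theta) / 4) Hab
              ltac:(apply Rdiv_lt_0_compat; nra)
              ltac:(intros x; apply continuity_pt_mult;
                    [apply continuity_pt_const; now intros ? ?|
                     apply continuity_pt_mult; [apply Hpsi|apply Hp]])
              Hq0 Hqout Hmass) as [N [mu [s [HN [Hs Happrox]]]]].
  exists N, mu, s, (d / 2); split; [exact HN|split; [exact Hs|split; [lra|]]].
  intros x Hx; specialize (Happrox x); unfold q in Happrox; rewrite Hpsi1 in Happrox by exact Hx.
  pose proof (Hpm x (near_mono X (d / 2) r0 x ltac:(lra) Hx)).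
  replace (/ (1 + e0)) with ((1 + theta) / 2) in Happrox by (unfold e0; field; lra).
  nra.
Qed.

Lemma logistic_pdf_continuous mu s x : 0 < s -> continuity_pt (logistic_pdf mu s) x.
Proof.
  intros Hs; apply continuity_pt_filterlim.
  apply (ex_derive_continuous (K := R_AbsRing) (V := R_NormedModule)).
  unfold logistic_pdf; auto_derive.
  pose proof (exp_pos (- ((x + - mu) * / s))); apply Rgt_not_eq, Rmult_lt_0_compat; [lra|nra].
Qed.

Lemma continuity_pt_sum_below (F : nat -> R -> R) n x :
  (forall i, continuity_pt (F i) x) -> continuity_pt (fun y => sum_below (fun i => F i y) n) x.
Proof.
  intros HF; induction n as [|n IH]; simpl.
  - apply continuity_pt_const; now intros ? ?.
  - now apply continuity_pt_plus.
Qed.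

Lemma fN_continuous N mu s x : (1 <= N)%nat -> 0 < s ->
  continuity_pt (fN N mu (fun _ => s)) x.
Proof.
  intros HN Hs.
  apply (continuity_pt_ext (fun y => / INR N * sum_below (fun i => logistic_pdf (mu i) s y) N));
    [intros y; now rewrite fN_common_scale|].
  apply continuity_pt_mult; [apply continuity_pt_const; now intros ? ?|].
  apply continuity_pt_sum_below; intros; now apply logistic_pdf_continuous.
Qed.

Lemma ln_ratio_bounds u v m s theta : 0 < m <= u -> 0 < v <= / (4 * s) -> 0 < s ->
  0 < theta -> theta * u <= v -> ln (4 * s * m) <= ln (u / v) <= - ln theta.
Proof.
  intros Hu Hv Hs Htheta Hdom; split.
  - apply ln_le; [nra|].
    replace (4 * s * m) with (m / / (4 * s)) by (field; lra).
    apply div_le_div_cross; [apply Rinv_0_lt_compat|..]; nra.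
  - rewrite <- ln_Rinv by exact Htheta; apply ln_le; [apply Rdiv_lt_0_compat; lra|].
    replace (/ theta) with (1 / theta) by (field; lra).
    apply div_le_div_cross; lra.
Qed.

Lemma continuity_pt_kl_integrand (p f : R -> R) x : continuity_pt p x -> continuity_pt f x ->
  0 < p x -> 0 < f x -> continuity_pt (fun y => p y * ln (p y / f y)) x.
Proof.
  intros Hp Hf Hpx Hfx; apply continuity_pt_mult; [exact Hp|].
  apply (continuity_pt_comp (fun y => p y / f y) ln); [apply continuity_pt_div; auto; lra|].
  apply continuity_pt_filterlim, continuous_ln, Rdiv_lt_0_compat; assumption.
Qed.

Lemma kl_integrand_bounds (p f : R -> R) x m s theta :
  continuity_pt p x -> continuity_pt f x -> 0 < m <= p x -> 0 < f x <= / (4 * s) ->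
  0 < s -> 0 < theta <= 1 -> theta * p x <= f x ->
  continuity_pt (fun y => p y * ln (p y / f y)) x /\
  Rabs (p x * ln (p x / f x)) <= (- ln theta + Rabs (ln (4 * s * m))) * p x /\
  p x * ln (p x / f x) <= - ln theta * p x.
Proof.
  intros Hp Hf Hpx Hfx Hs Htheta Hdom.
  destruct (ln_ratio_bounds (p x) (f x) m s theta) as [Hlo Hhi]; try lra.
  assert (ln theta <= 0) by (rewrite <- ln_1; apply ln_le; lra).
  split; [apply continuity_pt_kl_integrand; auto; lra|split].
  - rewrite Rabs_mult, Rabs_right, Rmult_comm by lra.
    apply Rmult_le_compat_r; [lra|]; apply Rabs_le.
    pose proof (Rle_abs (- ln (4 * s * m))); rewrite Rabs_Ropp in *.
    pose proof (Rabs_pos (ln (4 * s * m))); lra.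
  - rewrite Rmult_comm; apply Rmult_le_compat_r; lra.
Qed.

Theorem mainTheorem2 (X : R -> Prop) (p : R -> R) :
  compact X ->
  continuity p ->
  (forall x, X x -> 0 <= p x) ->
  IntegralOn X p 1 ->
  (exists delta, 0 < delta /\
     exists m, delta < m /\ forall x, X x -> m <= p x) ->
  forall eps, 0 < eps ->
    exists (N : nat) (mu sigma : nat -> R),
      (1 <= N)%nat /\
      (forall i, (i < N)%nat -> 0 < sigma i) /\
      exists kl,
        IntegralOn X (fun x => p x * ln (p x / fN N mu sigma x)) kl /\
        kl < eps.
Proof.
  intros _ Hp _ Hint [delta [Hdelta [m [Hdm Hm]]]] eps Heps.
  destruct (classic (exists x, X x)) as [[x0 Hx0]|Hempty].
  2: { exists 1%nat, (fun _ => 0), (fun _ => 1); split; [lia|split; [intros; lra|]].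
       exists 0; split; [now apply IntegralOn_empty|lra]. }
  apply IntegralOn_iff_cutoff_limit in Hint as [a [b [HX Hplim]]].
  pose proof (HX x0 Hx0).
  destruct (density_ge_near X a b p m Hp ltac:(lra) HX Hm) as [r0 [Hr0 Hpm]].
  set (theta := exp (- (eps / 2))).
  assert (Htheta : 0 < theta < 1)
    by (split; [apply exp_pos|rewrite <- exp_0; apply exp_increasing; lra]).
  destruct (logistic_mixture_ge_near X a b p (m / 2) r0 theta Hp HX ltac:(lra) Hplim
              ltac:(lra) Hr0 Hpm Htheta) as [N [mu [s [r [HN [Hs [Hr Hdom]]]]]]].
  exists N, mu, (fun _ => s); split; [exact HN|split; [intros; exact Hs|]].
  assert (Hc : - ln theta = eps / 2) by (unfold theta; rewrite ln_exp; ring).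
  set (M := - ln theta + Rabs (ln (4 * s * (m / 2)))).
  destruct (IntegralOn_exists_le X a b p (fun x => p x * ln (p x / fN N mu (fun _ => s) x))
              (Rmin r r0) M (- ln theta) HX ltac:(lra) ltac:(now apply Rmin_glb_lt)
              ltac:(unfold M; pose proof (Rabs_pos (ln (4 * s * (m / 2)))); lra)
              ltac:(lra) Hplim) as [kl [Hkl Hle]]; [|exists kl; split; [exact Hkl|lra]].
  intros x Hx.
  pose proof (Hpm x (near_mono X _ r0 x (Rmin_r r r0) Hx)).
  pose proof (Hdom x (near_mono X _ r x (Rmin_l r r0) Hx)).
  pose proof (fN_pos N mu s x HN Hs); pose proof (fN_le N mu s x HN Hs).
  apply (kl_integrand_bounds p _ x (m / 2) s theta); auto;
    try (apply fN_continuous; assumption); lra.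
Qed.
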